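(* Let $G$ be a groupoid that is a generalised inflation of its subgroupoid $U$, and suppose that $G$ is a right modular groupoid and that $U$ has a left identity element $1$ (i.e. $1\cdot u = u$ for all $u \in U$). Then $G$ is an inflation of $U$.
   Context: A groupoid is a set with a binary operation, written $xy$ or $x\cdot y$. A groupoid $G$ is right modular if $xy\cdot z = zy\cdot x$ for all $x,y,z \in G$. A groupoid $G$ is an inflation of its subgroupoid $U$ if $G = \bigcup_{u\in U} G_u$ where (1) $u \in G_u$ for all $u\in U$, (2) $G_u \cap G_v = \emptyset$ for $u \ne v$, and (3) $x \in G_u$, $y\in G_v$ implies $xy = uv$. A groupoid $G$ is a generalised inflation of its subgroupoid $U$ if $G = \bigcup_{u\in U} G_u$ where (1) $u \in G_u$ for all $u \in U$, (2) $G_u\cap G_v=\emptyset$ for $u\neq v$, (3) for every $x \in G$ there are maps $\alpha_x, \beta_x : U \to U$ such that for all $x \in G_u$ and $y \in G_v$ ($u,v\in U$) one has $xy = \alpha_x(v)\cdot \beta_y(u)$ (product computed in $U$), and (4) for $u \in U$, $\alpha_u$ and $\beta_u$ are both the constant map on $U$ with value $u$. *)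

Definition subgroupoid {T : Type} (mul : T -> T -> T) (U : T -> Prop) : Prop :=
  forall x y, U x -> U y -> U (mul x y).

Definition right_modular {T : Type} (mul : T -> T -> T) : Prop :=
  forall x y z, mul (mul x y) z = mul (mul z y) x.

Definition has_left_identity {T : Type} (mul : T -> T -> T) (U : T -> Prop) : Prop :=
  exists e, U e /\ forall u, U u -> mul e u = u.

(* A family (G_u)_{u in U} of subsets of T: Gf u x  means  x \in G_u.
   It is a partition of G indexed by U with u \in G_u. *)
Definition indexed_partition {T : Type} (U : T -> Prop) (Gf : T -> T -> Prop) : Prop :=
  (forall x, exists u, U u /\ Gf u x) /\
  (forall u, U u -> Gf u u) /\
  (forall u v x, U u -> U v -> Gf u x -> Gf v x -> u = v).

Definition inflation {T : Type} (mul : T -> T -> T) (U : T -> Prop) : Prop :=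
  exists Gf : T -> T -> Prop,
    indexed_partition U Gf /\
    (forall u v x y, U u -> U v -> Gf u x -> Gf v y -> mul x y = mul u v).

(* alpha x, beta x : U -> U are represented as functions T -> T mapping U into U. *)
Definition generalised_inflation {T : Type} (mul : T -> T -> T) (U : T -> Prop) : Prop :=
  exists (Gf : T -> T -> Prop) (alpha beta : T -> T -> T),
    indexed_partition U Gf /\
    (forall x v, U v -> U (alpha x v)) /\
    (forall x v, U v -> U (beta x v)) /\
    (forall u v x y, U u -> U v -> Gf u x -> Gf v y ->
        mul x y = mul (alpha x v) (beta y u)) /\
    (forall u v, U u -> U v -> alpha u v = u /\ beta u v = u).


(* All products of a generalised inflation lie in U, so the left identity e
   fixes them: xy = e(xy).  Right modularity makes left multiplication by the
   idempotent e distributive, so xy = (ex)(ey); hence G is the inflation of U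
   whose classes are the fibres of x |-> ex. *)

Lemma generalised_inflation_mul_closed {T : Type} (mul : T -> T -> T) (U : T -> Prop) :
  subgroupoid mul U -> generalised_inflation mul U ->
  forall x y, U (mul x y).
Proof.
  intros Hsub [Gf [alpha [beta [[Hcov _] [Halpha [Hbeta [Hmul _]]]]]]] x y.
  destruct (Hcov x) as [u [Uu Gx]].
  destruct (Hcov y) as [v [Uv Gy]].
  rewrite (Hmul u v x y Uu Uv Gx Gy).
  apply Hsub; auto.
Qed.

Lemma right_modular_idem_mul_distr {T : Type} (mul : T -> T -> T) (e : T) :
  right_modular mul -> mul e e = e ->
  forall x y, mul e (mul x y) = mul (mul e x) (mul e y).
Proof.
  intros Hmod Hee x y.
  replace (mul e (mul x y)) with (mul (mul e e) (mul x y)) by (rewrite Hee; reflexivity).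
  rewrite (Hmod e e (mul x y)), (Hmod x y e), (Hmod (mul e y) x e).
  reflexivity.
Qed.

Lemma inflation_of_retraction {T : Type} (mul : T -> T -> T) (U : T -> Prop)
    (r : T -> T) :
  (forall x, U (r x)) ->
  (forall u, U u -> r u = u) ->
  (forall x y, mul x y = mul (r x) (r y)) ->
  inflation mul U.
Proof.
  intros Hr Hfix Hmul.
  exists (fun u x => U u /\ r x = u).
  split; [split; [| split] |].
  - intros x. exists (r x). auto.
  - intros u Uu. auto.
  - intros u v x _ _ [_ Hu] [_ Hv]. congruence.
  - intros u v x y _ _ [_ Hu] [_ Hv]. rewrite Hmul. congruence.
Qed.

Theorem theorem3 (T : Type) (mul : T -> T -> T) (U : T -> Prop) :
  subgroupoid mul U ->
  generalised_inflation mul U ->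
  right_modular mul ->
  has_left_identity mul U ->
  inflation mul U.
Proof.
  intros Hsub Hgi Hmod [e [Ue Hid]].
  pose proof (generalised_inflation_mul_closed mul U Hsub Hgi) as Hclosed.
  assert (Hee : mul e e = e) by (apply Hid; exact Ue).
  apply (inflation_of_retraction mul U (mul e)).
  - intros x. apply Hclosed.
  - exact Hid.
  - intros x y.
    rewrite <- (right_modular_idem_mul_distr mul e Hmod Hee).
    symmetry. apply Hid, Hclosed.
Qed.
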